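(* Let $N\ge 2$ and $M\ge 1$ be integers and $P_0,\dots,P_{N-1}\ge 0$. Let $\{s_n^{(m)}: 0\le n\le N-1,\ 1\le m\le M\}$ be independent complex random variables such that, for each $n$, $s_n^{(1)},\dots,s_n^{(M)}$ are identically distributed with $\mathbb{E}[|s_n^{(m)}|^2]=1$ and $\mathbb{E}[|s_n^{(m)}|^4]=\mu_{4,n}$. Define the averaged autocorrelation $$\overline r_k=\frac{1}{M}\sum_{m=1}^M\sum_{n=0}^{N-1}P_n|s_n^{(m)}|^2e^{j\frac{2\pi}{N}nk},\qquad k=0,\dots,N-1.$$ Then $$\mathbb{E}[|\overline r_0|^2]=\frac{1}{M}\sum_{n=0}^{N-1}P_n^2(\mu_{4,n}-1)+\Big(\sum_{n=0}^{N-1}P_n\Big)^2,$$ $$\sum_{k=1}^{N-1}\mathbb{E}[|\overline r_k|^2]=\frac{N-1}{M}\sum_{n=0}^{N-1}P_n^2(\mu_{4,n}-1)+N\sum_{n=0}^{N-1}P_n^2-\Big(\sum_{n=0}^{N-1}P_n\Big)^2,$$ and consequently the matched-filter sensing SINR for target $q$ under coherent processing of the $M$ symbols is $$\mathrm{SINR}_q^{\mathrm{MF}}=\frac{\sigma_{\alpha_q}^2\,\mathbb{E}[|\overline r_0|^2]}{\frac{\sum_{i\ne q}\sigma_{\alpha_i}^2}{N-1}\sum_{k=1}^{N-1}\mathbb{E}[|\overline r_k|^2]+\frac{\sigma_z^2}{M}\sum_{n=0}^{N-1}P_n}.$$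
   Context: Setting: a monostatic OFDM sensing system with $N$ subcarriers transmits $M$ independent OFDM symbols $x^{(m)}[t]=\frac{1}{\sqrt N}\sum_{n}\sqrt{P_n}s_n^{(m)}e^{j\frac{2\pi}{N}nt}$; the echo contains $Q$ point targets with reflection coefficients $\alpha_i\sim\mathcal{CN}(0,\sigma_{\alpha_i}^2)$ and integer delays, plus AWGN of variance $\sigma_z^2$. The receiver correlates with the known transmitted symbols (matched filtering) and averages coherently over the $M$ symbols. The matched-filter SINR of target $q$ is the expected mainlobe power $\sigma_{\alpha_q}^2\mathbb{E}[|\overline r_0|^2]$ divided by the expected interference from the other targets (whose relative delays are modeled as uniformly distributed over the nonzero lags $\{1,\dots,N-1\}$, so each contributes $\sigma_{\alpha_i}^2$ times the average of $\mathbb{E}[|\overline r_k|^2]$ over $k=1,\dots,N-1$) plus the expected filtered noise power. *)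

From HB Require Import structures.
From mathcomp Require Import all_boot all_order all_algebra.
From mathcomp Require Import all_classical all_reals all_analysis.
From mathcomp Require Import complex.
Set Implicit Arguments. Unset Strict Implicit. Unset Printing Implicit Defensive.
Import Order.TTheory GRing.Theory Num.Theory.
Local Open Scope ring_scope.
Local Open Scope classical_set_scope.
Local Open Scope complex_scope.

Definition c2R2 {R : realType} (z : R[i]) : (R * R)%type := (complex.Re z, complex.Im z).

Definition cabs2 {R : realType} (z : R[i]) : R := complex.Re z ^+ 2 + complex.Im z ^+ 2.

Definition expj {R : realType} (theta : R) : R[i] := Complex (cos theta) (sin theta).

(* A complex random variable: its real and imaginary parts are jointly
   measurable (measurable into R x R with the product sigma-algebra). *)
Definition cmeasurable {d : measure_display} {T : measurableType d}
  {R : realType} (X : T -> R[i]) : Prop :=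
  measurable_fun setT (fun w => c2R2 (X w)).

Definition mutually_independent {d : measure_display} {T : measurableType d}
  {R : realType} (P : probability T R) {I : finType} (X : I -> T -> R[i]) : Prop :=
  forall (J : {set I}) (B : I -> set (R * R)%type),
    (forall i, measurable (B i)) ->
    P (\bigcap_(i in [set` J]) ((fun w => c2R2 (X i w)) @^-1` B i)) =
    (\prod_(i in J) P ((fun w => c2R2 (X i w)) @^-1` B i))%E.

Definition identically_distributed {d : measure_display} {T : measurableType d}
  {R : realType} (P : probability T R) (X Y : T -> R[i]) : Prop :=
  forall B : set (R * R)%type, measurable B ->
    P ((fun w => c2R2 (X w)) @^-1` B) = P ((fun w => c2R2 (Y w)) @^-1` B).

Definition rbar {R : realType} {T : Type} (N M : nat) (Pw : 'I_N -> R)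
  (s : 'I_N -> 'I_M -> T -> R[i]) (k : nat) (w : T) : R[i] :=
  (M%:R^-1)%:C * \sum_(m < M) \sum_(n < N)
     (Pw n * cabs2 (s n m w))%:C * expj (2 * pi * n%:R * k%:R / N%:R).

(* E[|rbar_k|^2] as a real number (its finiteness is part of the theorem). *)
Definition Er2 {d : measure_display} {T : measurableType d} {R : realType}
  (P : probability T R) (N M : nat) (Pw : 'I_N -> R)
  (s : 'I_N -> 'I_M -> T -> R[i]) (k : nat) : R :=
  fine (\int[P]_w (cabs2 (rbar Pw s k w))%:E).

(* Expected filtered noise power after matched filtering and coherent
   averaging over M symbols (taken from the system model). *)
Definition noise_power {R : realType} (N M : nat) (Pw : 'I_N -> R) (sz2 : R) : R :=
  sz2 / M%:R * \sum_(n < N) Pw n.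

(* Matched-filter SINR of target q (definition from the system model):
   mainlobe power / (interference of the other targets, each with the
   relative delay uniform over the nonzero lags 1..N-1, + noise power). *)
Definition SINR_MF {d : measure_display} {T : measurableType d} {R : realType}
  (P : probability T R) (N M : nat) (Pw : 'I_N -> R)
  (s : 'I_N -> 'I_M -> T -> R[i]) (Q : nat) (sa2 : 'I_Q -> R) (sz2 : R)
  (q : 'I_Q) : R :=
  sa2 q * Er2 P Pw s 0 /
  (\sum_(i < Q | i != q) sa2 i * ((N.-1)%:R^-1 * \sum_(1 <= k < N) Er2 P Pw s k)
   + noise_power M Pw sz2).

From HB Require Import structures.
From mathcomp Require Import all_boot all_order all_algebra.
From mathcomp Require Import all_classical all_reals all_analysis.
From mathcomp Require Import complex measurable_realfun.
From mathcomp Require Import ring lra.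
Import Order.TTheory GRing.Theory Num.Theory.
Local Open Scope ring_scope.
Local Open Scope classical_set_scope.

(* Expanding |rbar_k|^2 gives a quadratic form in the |s_n^(m)|^2 with
   coefficients P_n P_n' cos (2 pi (n - n') k / N) / M^2.  By independence the
   off-diagonal second moments are 1 and the diagonal ones are mu4_n, so
     E |rbar_k|^2 = |sum_n P_n e^(j 2 pi n k / N)|^2 + 1/M sum_n P_n^2 (mu4_n - 1).
   The spectrum term is (sum_n P_n)^2 at k = 0, and by orthogonality of the
   N-th roots of unity (Parseval) its sum over all k is N sum_n P_n^2; the SINR
   identity only rearranges its definition. *)

Section discrete_fourier.
Context {R : realType}.
Local Open Scope complex_scope.

Lemma Re_sum (I : Type) (r : seq I) (F : I -> R[i]) :
  complex.Re (\sum_(i <- r) F i) = \sum_(i <- r) complex.Re (F i).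
Proof. exact: (raddf_sum (@complex.Re R)). Qed.

Lemma Im_sum (I : Type) (r : seq I) (F : I -> R[i]) :
  complex.Im (\sum_(i <- r) F i) = \sum_(i <- r) complex.Im (F i).
Proof. exact: (raddf_sum (@complex.Im R)). Qed.

Lemma cabs2_ge0 (z : R[i]) : 0 <= cabs2 z.
Proof. by rewrite addr_ge0 // sqr_ge0. Qed.

Lemma cabs2_real (x : R) : cabs2 x%:C = x ^+ 2.
Proof. by rewrite /cabs2 /= expr0n addr0. Qed.

Lemma cabs2_scale (c : R) (z : R[i]) : cabs2 (c%:C * z) = c ^+ 2 * cabs2 z.
Proof. by case: z => a b; rewrite /cabs2 /=; ring. Qed.

Lemma cabs2_sum_expj (I : finType) (x t : I -> R) :
  cabs2 (\sum_i (x i)%:C * expj (t i)) =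
  \sum_i \sum_j x i * x j * cos (t i - t j).
Proof.
rewrite /cabs2 Re_sum Im_sum /= !expr2 !mulr_suml -big_split /=.
apply: eq_bigr => i _; rewrite !mulr_sumr -big_split /=.
by apply: eq_bigr => j _; rewrite cosB; ring.
Qed.

Lemma expjD (a b : R) : expj a * expj b = expj (a + b).
Proof. by rewrite /expj /= cosD sinD; congr (_ +i* _); ring. Qed.

Lemma expjX (a : R) (k : nat) : expj a ^+ k = expj (k%:R * a).
Proof.
elim: k => [|k IH]; first by rewrite expr0 mul0r /expj cos0 sin0.
by rewrite exprS IH expjD mulrS mulrDl mul1r.
Qed.

Lemma expj_2pi_natmul (k : nat) : expj (pi *+ 2 *+ k) = 1 :> R[i].
Proof.
by rewrite /expj -(add0r (pi *+ 2 *+ k)) (periodicn (@cosD2pi R)) (periodicn (@sinD2pi R))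
  cos0 sin0.
Qed.

Lemma cos_lt1 (x : R) : 0 < x < pi *+ 2 -> cos x < 1.
Proof.
move=> /andP[x_gt0 x_lt2pi].
have sin_half_gt0 : 0 < sin (x / 2).
  by apply: sin_gt0_pi; rewrite divr_gt0 //= ltr_pdivrMr // mulr_natr.
have -> : x = (x / 2) *+ 2 by rewrite -mulr_natr divfK.
by rewrite cos_mulr2n cos2sin2; nra.
Qed.

Definition dft_phase (N n k : nat) : R := 2 * pi * n%:R * k%:R / N%:R.

Lemma sum_cos_dft_phase (N d : nat) : (0 < d < N)%N ->
  \sum_(k < N) cos (dft_phase N d k) = 0.
Proof.
move=> /andP[d_gt0 d_ltN].
have N_gt0 : (0 : R) < N%:R by rewrite ltr0n (ltn_trans d_gt0).
pose z : R[i] := expj (2 * pi * d%:R / N%:R).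
have zX k : z ^+ k = expj (dft_phase N d k).
  by rewrite /z expjX /dft_phase; congr expj; ring.
have zN1 : z ^+ N = 1.
  rewrite zX /dft_phase -(expj_2pi_natmul d); congr expj.
  by rewrite -mulr_natr -mulrnA mulr_natr; field; rewrite gt_eqF.
have z_neq1 : z != 1.
  apply/eqP => /(congr1 (@complex.Re R)) /= /eqP; rewrite lt_eqF //.
  have d_gt0' : (0 : R) < d%:R by rewrite ltr0n.
  have dN : (d%:R : R) < N%:R by rewrite ltr_nat.
  have pi_gt0 := pi_gt0 R.
  apply: cos_lt1; rewrite divr_gt0 ?mulr_gt0 //=.
  by rewrite ltr_pdivrMr // mulr2n; nra.
have geom0 : \sum_(k < N) z ^+ k = 0.
  apply/eqP; move: (subrX1 z N); rewrite zN1 subrr => /esym/eqP.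
  by rewrite mulf_eq0 subr_eq0 (negbTE z_neq1).
transitivity (complex.Re (\sum_(k < N) z ^+ k)); last by rewrite geom0.
by rewrite Re_sum; apply: eq_bigr => k _; rewrite zX.
Qed.

Lemma sum_cos_dft_phaseB (N n n' : nat) : (n < N)%N -> (n' < N)%N ->
  \sum_(k < N) cos (dft_phase N n k - dft_phase N n' k) = (n == n')%:R * N%:R.
Proof.
have phaseB a b k : (b <= a)%N ->
    dft_phase N a k - dft_phase N b k = dft_phase N (a - b) k.
  by move=> ba; rewrite /dft_phase natrB //; ring.
move=> nN n'N; case: ltngtP => [n_lt|n_gt|<-].
- rewrite (eq_bigr (fun k : 'I_N => cos (dft_phase N (n' - n) k))) => [|k _].
    rewrite mul0r sum_cos_dft_phase //.
    by rewrite subn_gt0 n_lt (leq_ltn_trans (leq_subr _ _)).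
  by rewrite -cosN opprB phaseB // ltnW.
- rewrite (eq_bigr (fun k : 'I_N => cos (dft_phase N (n - n') k))) => [|k _].
    rewrite mul0r sum_cos_dft_phase //.
    by rewrite subn_gt0 n_gt (leq_ltn_trans (leq_subr _ _)).
  by rewrite phaseB // ltnW.
- under eq_bigr do rewrite subrr cos0.
  by rewrite sumr_const card_ord mul1r.
Qed.

Lemma parseval_cabs2 {N : nat} (x : 'I_N -> R) :
  \sum_(k < N) cabs2 (\sum_n (x n)%:C * expj (dft_phase N n k)) =
  N%:R * \sum_n x n ^+ 2.
Proof.
under eq_bigr do rewrite cabs2_sum_expj.
rewrite exchange_big mulr_sumr; apply: eq_bigr => n _.
rewrite exchange_big (bigD1 n) //= -mulr_sumr sum_cos_dft_phaseB // eqxx mul1r.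
rewrite big1 ?addr0 => [|n' n'n]; first by rewrite expr2 mulrC.
have /negbTE nn' : (n : nat) != n' by rewrite eq_sym.
by rewrite -mulr_sumr sum_cos_dft_phaseB // nn' mul0r mulr0.
Qed.

End discrete_fourier.

Section product_of_independent.
Local Open Scope ereal_scope.
Context {d : measure_display} {T : measurableType d} {R : realType} (P : probability T R).
Variables (X Y : T -> R).
Hypotheses (mX : measurable_fun setT X) (mY : measurable_fun setT Y).
Hypotheses (X_ge0 : forall w, (0 <= X w)%R) (Y_ge0 : forall w, (0 <= Y w)%R).
Hypothesis XY_indep : forall A B, measurable A -> measurable B ->
  P (X @^-1` A `&` Y @^-1` B) = P (X @^-1` A) * P (Y @^-1` B).

Let Xm : {mfun T >-> R} := HB.pack X (isMeasurableFun.Build _ _ _ _ X mX).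
Let Ym : {mfun T >-> R} := HB.pack Y (isMeasurableFun.Build _ _ _ _ Y mY).
Let XYm : {mfun T >-> (R * R)%type} :=
  HB.pack (fun w => (X w, Y w))
    (isMeasurableFun.Build _ _ _ _ _ (measurable_fun_pair mX mY)).

Let distribution_pair A : measurable A ->
  (distribution P Xm \x distribution P Ym) A = distribution P XYm A.
Proof. by apply: product_measure_unique => A1 B1 mA1 mB1; rewrite -XY_indep. Qed.

Let measurable_normr_EFin : measurable_fun setT (fun x : R => (`|x|)%:E).
Proof. by apply/measurable_EFinP; apply: normr_measurable. Qed.

Let integral_distribution_normr (Z : {mfun T >-> R}) : (forall w, (0 <= Z w)%R) ->
  \int[distribution P Z]_x (`|x|)%:E = \int[P]_w (Z w)%:E.
Proof.
move=> Z_ge0; rewrite ge0_integral_distribution //.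
by apply: eq_integral => w _ /=; rewrite ger0_norm.
Qed.

Lemma integral_mul_indep :
  \int[P]_w (X w * Y w)%:E = \int[P]_w (X w)%:E * \int[P]_w (Y w)%:E.
Proof.
pose f (z : R * R) := (`|z.1| * `|z.2|)%R.
have mf : measurable_fun setT (EFin \o f).
  apply/measurable_EFinP; apply: measurable_funM.
    exact: measurableT_comp (@normr_measurable R setT) measurable_fst.
  exact: measurableT_comp (@normr_measurable R setT) measurable_snd.
have f_ge0 z : 0 <= (EFin \o f) z by rewrite lee_fin mulr_ge0.
have -> : \int[P]_w (X w * Y w)%:E = \int[P]_w ((EFin \o f) \o XYm) w.
  by apply: eq_integral => w _ /=; rewrite /f /= !ger0_norm.
rewrite -ge0_integral_distribution //.
rewrite (eq_measure_integral (distribution P Xm \x distribution P Ym)); last first.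
  by move=> A mA _; apply/esym/distribution_pair.
rewrite (fubini_tonelli1 _ mf f_ge0) /fubini_F /f /=.
under eq_integral => x _.
  under eq_integral do rewrite EFinM.
  rewrite ge0_integralZl_EFin //.
  over.
rewrite /= ge0_integralZr //; last exact: integral_ge0.
by rewrite !integral_distribution_normr.
Qed.

End product_of_independent.

Section quadratic_forms.
Local Open Scope ereal_scope.
Context {d : measure_display} {T : measurableType d} {R : realType} (P : probability T R).

Lemma ge0_fin_integral_integrable (f : T -> R) (x : R) :
  measurable_fun setT f -> (forall w, (0 <= f w)%R) ->
  \int[P]_w (f w)%:E = x%:E -> P.-integrable setT (fun w => (f w)%:E).
Proof.
move=> mf f_ge0 fx; apply/integrableP; split; first exact/measurable_EFinP.
under eq_integral do rewrite gee0_abs ?lee_fin //.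
by rewrite fx ltry.
Qed.

Lemma integral_double_sum (I : finType) (Y : I -> I -> T -> R) (c e : I -> I -> R) :
  (forall a b, P.-integrable setT (fun w => (Y a b w)%:E)) ->
  (forall a b, \int[P]_w (Y a b w)%:E = (e a b)%:E) ->
  \int[P]_w (\sum_a \sum_b c a b * Y a b w)%:E = (\sum_a \sum_b c a b * e a b)%:E.
Proof.
move=> iY eY.
under eq_integral do rewrite pair_big /= -sumEFin.
rewrite integral_sum //; last first.
  by move=> ab; under eq_fun do rewrite EFinM; exact: integrableZl.
rewrite pair_big /= -sumEFin; apply: eq_bigr => ab _.
by under eq_integral do rewrite EFinM; rewrite integralZl // eY.
Qed.

Let sqr_norm (z : R * R) : R := (z.1 ^+ 2 + z.2 ^+ 2)%R.

Let measurable_sqr_norm : measurable_fun setT sqr_norm.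
Proof. by apply: measurable_funD; apply: measurable_funX. Qed.

Lemma measurable_cabs2 (Z : T -> R[i]) : cmeasurable Z ->
  measurable_fun setT (fun w => cabs2 (Z w)).
Proof. exact: measurableT_comp measurable_sqr_norm. Qed.

Lemma mutually_independent_pair (I : finType) (Z : I -> T -> R[i]) (a b : I)
    (A B : set (R * R)) :
  mutually_independent P Z -> a != b -> measurable A -> measurable B ->
  P ((c2R2 \o Z a) @^-1` A `&` (c2R2 \o Z b) @^-1` B) =
  P ((c2R2 \o Z a) @^-1` A) * P ((c2R2 \o Z b) @^-1` B).
Proof.
move=> Z_indep ab mA mB.
pose F i := if i == a then A else if i == b then B else setT.
have mF i : measurable (F i) by rewrite /F; case: ifP => _ //; case: ifP.
have Fa : F a = A by rewrite /F eqxx.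
have Fb : F b = B by rewrite /F eq_sym (negbTE ab) eqxx.
have := Z_indep [set a; b]%SET F mF.
rewrite big_setU1 /= ?inE // big_set1 Fa Fb => <-.
congr (P _); apply/seteqP; split => w /=.
  by move=> [wA wB] i /=; rewrite !inE => /orP[] /eqP->; rewrite ?Fa ?Fb.
by move=> wF; split; [rewrite -Fa | rewrite -Fb]; apply: wF; rewrite /= !inE eqxx ?orbT.
Qed.

Lemma integral_cabs2M_indep (I : finType) (Z : I -> T -> R[i]) (a b : I) :
  (forall i, cmeasurable (Z i)) -> mutually_independent P Z -> a != b ->
  \int[P]_w (cabs2 (Z a w) * cabs2 (Z b w))%:E =
  \int[P]_w (cabs2 (Z a w))%:E * \int[P]_w (cabs2 (Z b w))%:E.
Proof.
move=> mZ Z_indep ab.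
apply: integral_mul_indep.
- exact: measurable_cabs2.
- exact: measurable_cabs2.
- by move=> w; apply: cabs2_ge0.
- by move=> w; apply: cabs2_ge0.
move=> A B mA mB.
have mC C : measurable C -> measurable (sqr_norm @^-1` C).
  by move=> mC; rewrite -[_ @^-1` _]setTI; exact: measurable_sqr_norm.
(* [cabs2 \o Z a] is convertibly [sqr_norm \o c2R2 \o Z a]. *)
exact (mutually_independent_pair _ _ _ _ _ _ Z_indep ab (mC A mA) (mC B mB)).
Qed.

Lemma integral_cabs2_quadratic_form (I : finType) (Z : I -> T -> R[i])
    (mu : I -> R) (C : I -> I -> R) :
  (forall i, cmeasurable (Z i)) -> mutually_independent P Z ->
  (forall i, \int[P]_w (cabs2 (Z i w))%:E = 1%:E) ->
  (forall i, \int[P]_w (cabs2 (Z i w) ^+ 2)%:E = (mu i)%:E) ->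
  \int[P]_w (\sum_a \sum_b C a b * (cabs2 (Z a w) * cabs2 (Z b w)))%:E =
  (\sum_a \sum_b C a b + \sum_a C a a * (mu a - 1))%:E.
Proof.
move=> mZ Z_indep Z2 Z4.
pose e a b := if a == b then mu a else 1%R.
have moment2 a b : \int[P]_w (cabs2 (Z a w) * cabs2 (Z b w))%:E = (e a b)%:E.
  rewrite /e; case: eqVneq => [<-|ab]; first by under eq_integral do rewrite -expr2.
  by rewrite integral_cabs2M_indep // !Z2 mule1.
have integrable2 a b :
    P.-integrable setT (fun w => (cabs2 (Z a w) * cabs2 (Z b w))%:E).
  apply: ge0_fin_integral_integrable (moment2 a b).
  - by apply: measurable_funM; apply: measurable_cabs2.
  - by move=> w; rewrite mulr_ge0 ?cabs2_ge0.
rewrite (integral_double_sum _ _ _ _ integrable2 moment2).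
congr EFin; rewrite -big_split; apply: eq_bigr => a _ /=.
rewrite (bigD1 a) //= [in RHS](bigD1 a) //= /e eqxx.
under eq_bigr => b ba do rewrite eq_sym (negbTE ba) mulr1.
ring.
Qed.

End quadratic_forms.

Section averaged_autocorrelation.
Local Open Scope complex_scope.
Context {R : realType} {N M : nat} (Pw : 'I_N -> R).

Lemma sum_pair_fst (F : 'I_N -> R) :
  \sum_(a : 'I_N * 'I_M) F a.1 = M%:R * \sum_n F n.
Proof.
rewrite -(pair_big xpredT xpredT (fun n (_ : 'I_M) => F n)) /= mulr_sumr.
by apply: eq_bigr => n _; rewrite sumr_const card_ord mulr_natl.
Qed.

Lemma cabs2_rbar (T : Type) (s : 'I_N -> 'I_M -> T -> R[i]) k w :
  cabs2 (rbar Pw s k w) =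
  \sum_(a : 'I_N * 'I_M) \sum_(b : 'I_N * 'I_M)
    (M%:R^-1 ^+ 2 * Pw a.1 * Pw b.1 * cos (dft_phase N a.1 k - dft_phase N b.1 k)) *
    (cabs2 (s a.1 a.2 w) * cabs2 (s b.1 b.2 w)).
Proof.
rewrite /rbar exchange_big pair_big /= cabs2_scale cabs2_sum_expj mulr_sumr.
apply: eq_bigr => a _; rewrite mulr_sumr; apply: eq_bigr => b _ /=.
by rewrite /dft_phase; ring.
Qed.

Lemma sum_pair_fst2 (F : 'I_N -> 'I_N -> R) :
  \sum_(a : 'I_N * 'I_M) \sum_(b : 'I_N * 'I_M) F a.1 b.1 =
  M%:R ^+ 2 * \sum_n \sum_n' F n n'.
Proof.
under eq_bigr do rewrite (sum_pair_fst (F _)).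
by rewrite (sum_pair_fst (fun n => M%:R * \sum_n' F n n')) -mulr_sumr mulrA.
Qed.

Lemma integral_cabs2_rbar {d} {T : measurableType d} (P : probability T R)
    (mu4 : 'I_N -> R) (s : 'I_N -> 'I_M -> T -> R[i]) (k : nat) :
  (0 < M)%N ->
  (forall n m, cmeasurable (s n m)) ->
  mutually_independent P (fun nm : 'I_N * 'I_M => s nm.1 nm.2) ->
  (forall n m, (\int[P]_w (cabs2 (s n m w))%:E = 1%:E)%E) ->
  (forall n m, (\int[P]_w ((cabs2 (s n m w)) ^+ 2)%:E = (mu4 n)%:E)%E) ->
  (\int[P]_w (cabs2 (rbar Pw s k w))%:E =
   (cabs2 (\sum_n (Pw n)%:C * expj (dft_phase N n k))
    + M%:R^-1 * \sum_n Pw n ^+ 2 * (mu4 n - 1))%:E)%E.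
Proof.
move=> M_gt0 ms s_indep s2 s4.
have M_neq0 : M%:R != 0 :> R by rewrite pnatr_eq0 -lt0n.
under eq_integral do rewrite cabs2_rbar.
rewrite (integral_cabs2_quadratic_form P _ _ (fun a => mu4 a.1) _ _ s_indep) //.
rewrite (sum_pair_fst2 (fun n n' =>
  M%:R^-1 ^+ 2 * Pw n * Pw n' * cos (dft_phase N n k - dft_phase N n' k))).
rewrite (sum_pair_fst (fun n =>
  M%:R^-1 ^+ 2 * Pw n * Pw n * cos (dft_phase N n k - dft_phase N n k) * (mu4 n - 1))).
rewrite cabs2_sum_expj !mulr_sumr; congr (_ + _)%:E.
  apply: eq_bigr => n _; rewrite mulr_sumr; apply: eq_bigr => n' _.
  by field.
by apply: eq_bigr => n _; rewrite subrr cos0; field.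
Qed.

End averaged_autocorrelation.

Theorem theorem1 (d : measure_display) (T : measurableType d) (R : realType)
  (P : probability T R) (N M : nat) (Pw : 'I_N -> R) (mu4 : 'I_N -> R)
  (s : 'I_N -> 'I_M -> T -> R[i]) (Q : nat) (sa2 : 'I_Q -> R) (sz2 : R)
  (q : 'I_Q) :
  (2 <= N)%N -> (1 <= M)%N ->
  (forall n, 0 <= Pw n) ->
  (forall n m, cmeasurable (s n m)) ->
  mutually_independent P (fun nm : 'I_N * 'I_M => s nm.1 nm.2) ->
  (forall n m m', identically_distributed P (s n m) (s n m')) ->
  (forall n m, (\int[P]_w (cabs2 (s n m w))%:E = 1%:E)%E) ->
  (forall n m, (\int[P]_w ((cabs2 (s n m w)) ^+ 2)%:E = (mu4 n)%:E)%E) ->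
  (forall i, 0 <= sa2 i) -> 0 <= sz2 ->
  [/\ (\int[P]_w (cabs2 (rbar Pw s 0 w))%:E =
        (M%:R^-1 * \sum_(n < N) Pw n ^+ 2 * (mu4 n - 1)
         + (\sum_(n < N) Pw n) ^+ 2)%:E)%E,
      ((\sum_(1 <= k < N) \int[P]_w (cabs2 (rbar Pw s k w))%:E) =
        ((N.-1)%:R / M%:R * \sum_(n < N) Pw n ^+ 2 * (mu4 n - 1)
         + N%:R * \sum_(n < N) Pw n ^+ 2 - (\sum_(n < N) Pw n) ^+ 2)%:E)%E
    & SINR_MF P Pw s sa2 sz2 q =
        sa2 q * Er2 P Pw s 0 /
        ((\sum_(i < Q | i != q) sa2 i) / (N.-1)%:R * \sum_(1 <= k < N) Er2 P Pw s k
         + sz2 / M%:R * \sum_(n < N) Pw n)].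
Proof.
move=> N_ge2 M_gt0 _ ms s_indep _ s2 s4 _ _.
pose spectrum k := cabs2 (\sum_n ((Pw n)%:C * expj (dft_phase N n k))%C).
have E_rbar k := integral_cabs2_rbar Pw P _ _ k M_gt0 ms s_indep s2 s4.
have spectrum0 : spectrum 0%N = (\sum_n Pw n) ^+ 2.
  rewrite /spectrum -cabs2_real rmorph_sum; congr cabs2; apply: eq_bigr => n _.
  by rewrite /dft_phase mulr0 mul0r /expj cos0 sin0 mulr1.
have spectrum_sum : \sum_(1 <= k < N) spectrum k =
    N%:R * \sum_n Pw n ^+ 2 - (\sum_n Pw n) ^+ 2.
  have := parseval_cabs2 Pw; rewrite -(big_mkord xpredT spectrum) big_ltn 1?ltnW //.
  by rewrite spectrum0 => <-; rewrite addrC addKr.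
split.
- by rewrite E_rbar -/(spectrum 0%N) spectrum0 addrC.
- under eq_bigr do rewrite E_rbar.
  rewrite sumEFin big_split /= spectrum_sum sumr_const_nat -subn1 -mulr_natr.
  by congr EFin; field; rewrite pnatr_eq0 -lt0n.
- rewrite /SINR_MF /noise_power -mulr_suml; congr (_ / (_ + _)); ring.
Qed.
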